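(* Assume $\mathbf 1\in\Sigma^\circ$. Let $\mathbf t\in\mathcal V$ and $c^*\in\mathbb R$ be such that $\mathbf t-c^*\mathbf 1$ lies on the boundary of $\Sigma$, let $c<c^*$, and let $\mathbf y$ denote the gradient certificate of $\mathbf t-c\mathbf 1$. Then there exists a constant $C>0$, depending only on the operator $\Lambda$ (and not on $\mathbf t$ or $c$), such that \[ c^*-c\ \le\ \left(C\,\|\mathbf 1\|^*_{\mathbf y}\right)^{-1}. \]
   Context: Fix nonzero real polynomials $g_1,\dots,g_m$ in $n$ variables and nonnegative integers $d_1,\dots,d_m$. Let $\mathcal V$ be the real vector space of polynomials $\sum_{i=1}^m g_i r_i$ with $\deg r_i\le 2d_i$, and $\Sigma\subseteq\mathcal V$ the cone of weighted sums of squares $\sum_i g_i\sigma_i$ with each $\sigma_i$ a sum of squares of polynomials of degree at most $d_i$; assume $\Sigma$ is a proper cone. Fix a basis $\mathbf q=(q_1,\dots,q_U)$ of $\mathcal V$, identify $\mathcal V$ and its dual with $\mathbb R^U$ with the standard inner product and Euclidean norm $\|\cdot\|$; $\Sigma^*$ is the dual cone, $K^\circ$ the interior of $K$; $\mathbf 1$ is the coefficient vector of the constant polynomial $1$. For each $i$ fix a basis $\mathbf p_i$ (of size $L_i$) of polynomials of degree at most $d_i$ and let $\Lambda_i:\mathbb R^U\to\mathbb S^{L_i}$ be the unique linear map with $\sum_u q_u\Lambda_i(\mathbf e_u)=g_i\mathbf p_i\mathbf p_i^T$; $\Lambda=\Lambda_1\oplus\cdots\oplus\Lambda_m$ (block diagonal),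 $\Lambda^*$ its adjoint; $(\Sigma^* )^\circ=\{\mathbf x:\Lambda(\mathbf x)\succ0\}$. On $(\Sigma^* )^\circ$ let $f(\mathbf x)=-\ln\det\Lambda(\mathbf x)$, with gradient $g(\mathbf x)=-\Lambda^*(\Lambda(\mathbf x)^{-1})$ and Hessian $H(\mathbf x)\mathbf w=\Lambda^*(\Lambda(\mathbf x)^{-1}\Lambda(\mathbf w)\Lambda(\mathbf x)^{-1})$. Dual local norm $\|\mathbf s\|^*_{\mathbf x}=\|H(\mathbf x)^{-1/2}\mathbf s\|$. For $\mathbf s\in\Sigma^\circ$, the gradient certificate of $\mathbf s$ is the unique $\mathbf y\in(\Sigma^* )^\circ$ with $-g(\mathbf y)=\mathbf s$. *)

From HB Require Import structures.
From mathcomp Require Import all_boot all_order all_algebra.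
From mathcomp Require Import mpoly.
From mathcomp Require Import reals.
Set Implicit Arguments. Unset Strict Implicit. Unset Printing Implicit Defensive.
Import Order.TTheory GRing.Theory Num.Theory.
Local Open Scope ring_scope.

Section Defs.
Variable R : realType.

(* total degree at most d  (msize p = 1 + total degree, msize 0 = 0) *)
Definition deg_le (n : nat) (p : {mpoly R[n]}) (d : nat) : Prop := (msize p <= d.+1)%N.

Definition sos_le (n : nat) (d : nat) (s : {mpoly R[n]}) : Prop :=
  exists hs : seq {mpoly R[n]},
    (forall h, h \in hs -> deg_le h d) /\ s = \sum_(h <- hs) h ^+ 2.

Definition inV (n m : nat) (g : 'I_m -> {mpoly R[n]}) (d : 'I_m -> nat)
  (f : {mpoly R[n]}) : Prop :=
  exists r : 'I_m -> {mpoly R[n]},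
    (forall i, deg_le (r i) (2 * d i)) /\ f = \sum_(i < m) g i * r i.

Definition inWSOS (n m : nat) (g : 'I_m -> {mpoly R[n]}) (d : 'I_m -> nat)
  (f : {mpoly R[n]}) : Prop :=
  exists sg : 'I_m -> {mpoly R[n]},
    (forall i, sos_le (d i) (sg i)) /\ f = \sum_(i < m) g i * sg i.

Definition polyOf (n U : nat) (q : 'I_U -> {mpoly R[n]}) (x : 'cV[R]_U) : {mpoly R[n]} :=
  \sum_(u < U) x u 0 *: q u.

Definition is_basis (n U : nat) (P : {mpoly R[n]} -> Prop) (q : 'I_U -> {mpoly R[n]}) : Prop :=
  [/\ forall u, P (q u),
      forall x : 'cV[R]_U, polyOf q x = 0 -> x = 0
    & forall f, P f -> exists x : 'cV[R]_U, f = polyOf q x].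

Definition norm2 (U : nat) (v : 'cV[R]_U) : R := Num.sqrt (\sum_(u < U) v u 0 ^+ 2).

Definition interiorP (U : nat) (K : 'cV[R]_U -> Prop) (x : 'cV[R]_U) : Prop :=
  exists2 e : R, 0 < e & forall z, norm2 (z - x) < e -> K z.

Definition closureP (U : nat) (K : 'cV[R]_U -> Prop) (x : 'cV[R]_U) : Prop :=
  forall e : R, 0 < e -> exists z, K z /\ norm2 (z - x) < e.

Definition boundaryP (U : nat) (K : 'cV[R]_U -> Prop) (x : 'cV[R]_U) : Prop :=
  closureP K x /\ ~ interiorP K x.

Definition proper_cone (U : nat) (K : 'cV[R]_U -> Prop) : Prop :=
  [/\ forall x y, K x -> K y -> K (x + y),
      forall (a : R) x, 0 <= a -> K x -> K (a *: x),
      forall x, closureP K x -> K x,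
      forall x, K x -> K (- x) -> x = 0
    & exists x, interiorP K x].

Definition posdef (L : nat) (M : 'M[R]_L) : Prop :=
  M^T = M /\ forall v : 'cV[R]_L, v != 0 -> 0 < (v^T *m M *m v) 0 0.

Definition LamB (U m : nat) (L : 'I_m -> nat)
  (Lam : forall i : 'I_m, 'cV[R]_U -> 'M[R]_(L i)) (x : 'cV[R]_U)
  : 'M[R]_(\sum_(i < m) L i) := \mxdiag_(i < m) Lam i x.

(* adjoint of a linear map A : R^U -> S^N w.r.t. the standard / trace inner products *)
Definition adjoint (U N : nat) (A : 'cV[R]_U -> 'M[R]_N) (S : 'M[R]_N) : 'cV[R]_U :=
  \col_(u < U) \tr (A (delta_mx u 0) *m S).

Definition grad (U N : nat) (A : 'cV[R]_U -> 'M[R]_N) (x : 'cV[R]_U) : 'cV[R]_U :=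
  - adjoint A (invmx (A x)).

(* Hessian H(x), as the U x U matrix whose v-th column is H(x) e_v,
   H(x) w = Lambda^*(Lambda(x)^{-1} Lambda(w) Lambda(x)^{-1}) *)
Definition hess (U N : nat) (A : 'cV[R]_U -> 'M[R]_N) (x : 'cV[R]_U) : 'M[R]_U :=
  \matrix_(u < U, v < U)
     adjoint A (invmx (A x) *m A (delta_mx v 0) *m invmx (A x)) u 0.

(* dual local norm ||s||*_x = ||H(x)^{-1/2} s|| = sqrt (s^T H(x)^{-1} s) *)
Definition dual_norm (U N : nat) (A : 'cV[R]_U -> 'M[R]_N) (x s : 'cV[R]_U) : R :=
  Num.sqrt ((s^T *m invmx (hess A x) *m s) 0 0).

End Defs.

(* Write u = t - c* 1, which lies in Sigma = Lambda^*(PSD) because Sigma is closed,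
   s = t - c 1 = Lambda^*(Lambda(y)^-1), r = c* - c, so that s - u = r 1, and
   z = H(y)^-1 1, so that (||1||*_y)^2 = <1, z> = <z, H(y) z> =: Q.  Pairing s - u with z
   gives r Q = tr(Lambda(z) Lambda(y)^-1) - <z, u>.  With a Cholesky factorization
   Lambda(y) = C^T C and X = C^-T Lambda(z) C^-1 we have Q = ||X||_F^2, so Cauchy-Schwarz
   bounds the trace by sqrt(N) sqrt(Q), and each term v^T Lambda(z) v of
   <z, u> = sum v^T Lambda(z) v by sqrt(Q) v^T Lambda(y) v.  Finally
   sum v^T Lambda(y) v = <y, u> = <y, s> - r <y, 1> <= tr(I_N) = N, whence
   r sqrt(Q) <= N + sqrt(N), where N is the size of Lambda. *)

From HB Require Import structures.
From mathcomp Require Import all_boot all_order all_algebra.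
From mathcomp Require Import mpoly.
From mathcomp Require Import reals.
From mathcomp Require Import ring lra.
Set Implicit Arguments. Unset Strict Implicit. Unset Printing Implicit Defensive.
Import Order.TTheory GRing.Theory Num.Theory.
Local Open Scope ring_scope.

Section Frobenius.
Variable R : realFieldType.

Lemma cauchy_schwarz (I : finType) (a b : I -> R) :
  (\sum_i a i * b i) ^+ 2 <= (\sum_i a i ^+ 2) * (\sum_i b i ^+ 2).
Proof.
have lagrange : \sum_i \sum_j (a i * b j - a j * b i) ^+ 2 =
    2 * ((\sum_i a i ^+ 2) * (\sum_i b i ^+ 2) - (\sum_i a i * b i) ^+ 2).
  have expand i j : (a i * b j - a j * b i) ^+ 2 =
      a i ^+ 2 * b j ^+ 2 + b i ^+ 2 * a j ^+ 2 - 2 * (a i * b i * (a j * b j)).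
    by ring.
  under eq_bigr => i _ do under eq_bigr => j _ do rewrite expand.
  under eq_bigr => i _ do rewrite sumrB big_split /= -!mulr_sumr.
  by rewrite sumrB big_split /= -!mulr_sumr -!mulr_suml; ring.
have : 0 <= \sum_i \sum_j (a i * b j - a j * b i) ^+ 2.
  by apply: sumr_ge0 => i _; apply: sumr_ge0 => j _; exact: sqr_ge0.
by rewrite lagrange pmulr_rge0 // subr_ge0.
Qed.

Lemma le_of_sqr_le (x c : R) : 0 <= c -> x ^+ 2 <= c ^+ 2 -> x <= c.
Proof. by move=> c_ge0 le_sqr; nra. Qed.

Lemma dotmx_selfE N (a : 'cV[R]_N) : (a^T *m a) 0 0 = \sum_i a i 0 ^+ 2.
Proof. by rewrite mxE; apply: eq_bigr => i _; rewrite mxE expr2. Qed.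

Lemma dotmx_self_ge0 N (a : 'cV[R]_N) : 0 <= (a^T *m a) 0 0.
Proof. by rewrite dotmx_selfE; apply: sumr_ge0 => i _; exact: sqr_ge0. Qed.

Lemma dotmx_self_eq0 N (a : 'cV[R]_N) : (a^T *m a) 0 0 = 0 -> a = 0.
Proof.
rewrite dotmx_selfE => a0; apply/matrixP => i j; rewrite (ord1 j) mxE.
have := @psumr_eq0P _ _ _ _ (fun k _ => sqr_ge0 (a k 0)) a0 i isT.
by move/eqP; rewrite sqrf_eq0 => /eqP.
Qed.

Definition frobenius_sqr N (X : 'M[R]_N) := \sum_i \sum_j X i j ^+ 2.

Lemma frobenius_sqr_ge0 N (X : 'M[R]_N) : 0 <= frobenius_sqr X.
Proof. by apply: sumr_ge0 => i _; apply: sumr_ge0 => j _; exact: sqr_ge0. Qed.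

Lemma frobenius_sqr_eq0 N (X : 'M[R]_N) : frobenius_sqr X = 0 -> X = 0.
Proof.
move=> X0; apply/matrixP => i j; rewrite mxE.
have rows_ge0 k : 0 <= \sum_l X k l ^+ 2 by apply: sumr_ge0 => l _; exact: sqr_ge0.
have row_i0 := @psumr_eq0P _ _ _ _ (fun k _ => rows_ge0 k) X0 i isT.
have := @psumr_eq0P _ _ _ _ (fun k _ => sqr_ge0 (X i k)) row_i0 j isT.
by move/eqP; rewrite sqrf_eq0 => /eqP.
Qed.

Lemma mxtrace_mul_sym N (X : 'M[R]_N) : X^T = X -> \tr (X *m X) = frobenius_sqr X.
Proof.
move=> Xsym; rewrite /mxtrace /frobenius_sqr; apply: eq_bigr => i _.
rewrite mxE; apply: eq_bigr => j _; by rewrite expr2 -[in X j i]Xsym mxE.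
Qed.

Lemma sqr_mxtrace_le N (X : 'M[R]_N) : (\tr X) ^+ 2 <= N%:R * frobenius_sqr X.
Proof.
have := cauchy_schwarz (fun _ : 'I_N => 1) (fun i => X i i).
under eq_bigr do rewrite mul1r.
under [X in _ <= X * _]eq_bigr do rewrite expr1n.
rewrite sumr_const card_ord => /le_trans; apply; rewrite ler_wpM2l //.
apply: ler_sum => i _; rewrite (bigD1 i) //= lerDl.
by apply: sumr_ge0 => j _; exact: sqr_ge0.
Qed.

Lemma quad_formE N (X : 'M[R]_N) (a : 'cV[R]_N) :
  (a^T *m X *m a) 0 0 = \sum_i \sum_j a i 0 * a j 0 * X i j.
Proof.
rewrite mxE exchange_big /=; apply: eq_bigr => j _.
rewrite mxE mulr_suml; apply: eq_bigr => i _; rewrite !mxE; ring.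
Qed.

Lemma sqr_quad_form_le N (X : 'M[R]_N) (a : 'cV[R]_N) :
  (a^T *m X *m a) 0 0 ^+ 2 <= frobenius_sqr X * (a^T *m a) 0 0 ^+ 2.
Proof.
rewrite quad_formE dotmx_selfE /frobenius_sqr !pair_bigA /=.
under eq_bigr do rewrite mulrC.
apply: (le_trans (cauchy_schwarz _ _)); rewrite ler_wpM2l //.
  by apply: sumr_ge0 => ij _; exact: sqr_ge0.
rewrite expr2 big_distrlr /= pair_bigA.
by under eq_bigr do rewrite exprMn.
Qed.

End Frobenius.

Section Cholesky.
Variable R : realType.

Lemma posdef_congr n (M F : 'M[R]_n) :
  posdef M -> F \in unitmx -> posdef (F^T *m M *m F).
Proof.
move=> [Msym Mpos] Fu; split; first by rewrite !trmx_mul trmxK Msym mulmxA.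
move=> v v0; have Fv0 : F *m v != 0.
  by apply: contra_neq v0 => Fv0; rewrite -(mulKmx Fu v) Fv0 mulmx0.
by have := Mpos _ Fv0; rewrite trmx_mul !mulmxA.
Qed.

Lemma posdef_ulsubmx m n (M : 'M[R]_(m + n)) : posdef M -> posdef (ulsubmx M).
Proof.
move=> [Msym Mpos]; split; first by rewrite trmx_ulsub Msym.
move=> w w0; have := Mpos (col_mx w 0); rewrite col_mx_eq0 (negbTE w0) => /(_ isT).
rewrite -[M in _ *m M *m _]submxK tr_col_mx trmx0 mul_row_block !mul0mx !addr0.
by rewrite mul_row_col mulmx0 addr0.
Qed.

Lemma posdef_drsubmx m n (M : 'M[R]_(m + n)) : posdef M -> posdef (drsubmx M).
Proof.
move=> [Msym Mpos]; split; first by rewrite trmx_drsub Msym.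
move=> w w0; have := Mpos (col_mx 0 w); rewrite col_mx_eq0 (negbTE w0) andbF => /(_ isT).
rewrite -[M in _ *m M *m _]submxK tr_col_mx trmx0 mul_row_block !mul0mx !add0r.
by rewrite mul_row_col mulmx0 add0r.
Qed.

Lemma schur_congr n (a : R) (B : 'rV[R]_n) (D : 'M[R]_n) : a != 0 ->
  let F := block_mx 1%:M (a^-1 *: B) 0 1%:M in
  block_mx a%:M B B^T D = F^T *m block_mx a%:M 0 0 (D - a^-1 *: (B^T *m B)) *m F.
Proof.
move=> a0 F; rewrite /F tr_block_mx !trmx1 trmx0 !mulmx_block.
rewrite !mul1mx !mul0mx !mulmx0 !mulmx1 !addr0 !add0r; congr block_mx.
- by rewrite mul_scalar_mx scalerA mulfV // scale1r.
- by rewrite mul_mx_scalar linearZ /= scalerA mulfV // scale1r.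
- rewrite mul_mx_scalar linearZ /= -!scalemxAl !scalerA mulVf // scale1r.
  by rewrite linearZ /= -scalemxAl addrC subrK.
Qed.

Lemma posdef_cholesky n (M : 'M[R]_n) :
  posdef M -> exists2 C : 'M_n, C \in unitmx & M = C^T *m C.
Proof.
elim: n M => [|n IH] M Mpd.
  by exists 1%:M; [exact: unitmx1 | apply/matrixP => -[]].
move: M Mpd; rewrite -[n.+1]/(1 + n)%N => M Mpd.
set a := ulsubmx M 0 0; set B := ursubmx M; set D := drsubmx M.
have a_gt0 : 0 < a.
  have [_ /(_ 1%:M (oner_neq0 _))] := posdef_ulsubmx Mpd.
  by rewrite trmx1 mul1mx mulmx1.
have ME : M = block_mx a%:M B B^T D.
  have [Msym _] := Mpd.
  by rewrite -[LHS]submxK -mx11_scalar -/B -/D -[in dlsubmx M]Msym -trmx_ursub.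
set S := D - a^-1 *: (B^T *m B).
set F := block_mx 1%:M (a^-1 *: B) 0 1%:M.
have Fu : F \in unitmx by rewrite unitmxE det_ublock !det1 mulr1 unitr1.
have Spd : posdef S.
  have Fiu : invmx F \in unitmx by rewrite unitmx_inv.
  have := posdef_congr Mpd Fiu.
  rewrite [in _ *m M]ME (schur_congr _ _ (lt0r_neq0 a_gt0)) -/F.
  rewrite -!mulmxA mulmxV // mulmx1 !mulmxA -trmx_mul mulmxV // trmx1 mul1mx.
  by move/posdef_drsubmx; rewrite block_mxKdr.
have [C' C'u SE] := IH S Spd.
exists (block_mx (Num.sqrt a)%:M 0 0 C' *m F).
  rewrite unitmx_mul Fu andbT unitmxE det_ublock det_scalar1 unitfE.
  by rewrite mulf_neq0 ?sqrtr_eq0 -?ltNge // -unitfE -unitmxE.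
rewrite ME (schur_congr _ _ (lt0r_neq0 a_gt0)) -/F -/S trmx_mul !mulmxA.
congr (_ *m _); rewrite -!mulmxA; congr (_ *m _).
rewrite tr_block_mx !trmx0 tr_scalar_mx mulmx_block !mulmx0 !mul0mx !addr0 add0r.
by rewrite -scalar_mxM -expr2 sqr_sqrtr ?ltW // SE.
Qed.

Lemma posdef_unitmx n (M : 'M[R]_n) : posdef M -> M \in unitmx.
Proof.
by move=> /posdef_cholesky [C C_unit ->]; rewrite unitmx_mul unitmx_tr C_unit.
Qed.

End Cholesky.

Lemma norm2Z (R : realType) U (c : R) (w : 'cV[R]_U) : norm2 (c *: w) = `|c| * norm2 w.
Proof.
rewrite /norm2; under eq_bigr do rewrite mxE exprMn.
by rewrite -mulr_sumr sqrtrM ?sqr_ge0 // sqrtr_sqr.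
Qed.

Lemma norm2_0 (R : realType) U : norm2 (0 : 'cV[R]_U) = 0.
Proof. by rewrite -(scale0r (0 : 'cV[R]_U)) norm2Z normr0 mul0r. Qed.

Section LinearOperator.
Variables (R : realType) (U N : nat) (A : 'cV[R]_U -> 'M[R]_N).
Hypothesis A_linear : linear A.
HB.instance Definition _ := GRing.isLinear.Build R 'cV[R]_U 'M[R]_N *:%R A A_linear.

Lemma linear_coordE (w : 'cV[R]_U) : A w = \sum_u w u 0 *: A (delta_mx u 0).
Proof.
rewrite {1}[w]matrix_sum_delta linear_sum; apply: eq_bigr => u _.
by rewrite big_ord1 linearZ.
Qed.

Lemma adjoint_pairing (w : 'cV[R]_U) (S : 'M[R]_N) :
  (w^T *m adjoint A S) 0 0 = \tr (A w *m S).
Proof.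
rewrite (linear_coordE w) mulmx_suml linear_sum mxE; apply: eq_bigr => u _.
by rewrite -scalemxAl linearZ !mxE.
Qed.

Lemma hess_mulmx (y z : 'cV[R]_U) :
  hess A y *m z = adjoint A (invmx (A y) *m A z *m invmx (A y)).
Proof.
apply/matrixP => u j; rewrite (ord1 j) !mxE (linear_coordE z).
rewrite mulmx_sumr mulmx_suml mulmx_sumr linear_sum; apply: eq_bigr => v _.
by rewrite -scalemxAr -scalemxAl -scalemxAr linearZ !mxE mulrC.
Qed.

Lemma hess_quad (y z : 'cV[R]_U) :
  (z^T *m hess A y *m z) 0 0 = \tr (A z *m invmx (A y) *m A z *m invmx (A y)).
Proof. by rewrite -mulmxA hess_mulmx adjoint_pairing !mulmxA. Qed.

Lemma adjoint_rank1E (v : 'cV[R]_N) :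
  adjoint A (v *m v^T) = \col_u (v^T *m A (delta_mx u 0) *m v) 0 0.
Proof.
apply/matrixP => u j; rewrite (ord1 j) [LHS]mxE [RHS]mxE.
by rewrite mulmxA mxtrace_mulC mulmxA trace_mx11.
Qed.

(* The cone Sigma in coefficients: Lambda^* of the positive semidefinite matrices. *)
Definition adjoint_sos (x : 'cV[R]_U) :=
  exists vs : seq 'cV[R]_N, x = \sum_(v <- vs) adjoint A (v *m v^T).

Lemma adjoint_sos0 : adjoint_sos 0.
Proof. by exists [::]; rewrite big_nil. Qed.

Lemma adjoint_sosD (x z : 'cV[R]_U) :
  adjoint_sos x -> adjoint_sos z -> adjoint_sos (x + z).
Proof. by move=> [xs ->] [zs ->]; exists (xs ++ zs); rewrite big_cat. Qed.

Lemma adjoint_sos_pairing (w : 'cV[R]_U) (vs : seq 'cV[R]_N) :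
  (w^T *m \sum_(v <- vs) adjoint A (v *m v^T)) 0 0 =
  \sum_(v <- vs) (v^T *m A w *m v) 0 0.
Proof.
rewrite mulmx_sumr summxE; apply: eq_bigr => v _.
by rewrite adjoint_pairing mulmxA mxtrace_mulC mulmxA trace_mx11.
Qed.

Lemma adjoint_sos_pairing_ge0 (y x : 'cV[R]_U) :
  posdef (A y) -> adjoint_sos x -> 0 <= (y^T *m x) 0 0.
Proof.
move=> [_ Ay_pos] [vs ->]; rewrite adjoint_sos_pairing; apply: sumr_ge0 => v _.
have [->|v0] := eqVneq v 0; first by rewrite trmx0 !mul0mx mxE.
exact/ltW/Ay_pos.
Qed.

Lemma interior_adjoint_sos_inj (x : 'cV[R]_U) :
  interiorP adjoint_sos x -> forall w, A w = 0 -> w = 0.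
Proof.
move=> [e e_gt0 ball_x] w Aw0.
(* w is orthogonal to the cone, which contains a ball around x. *)
have orth z : adjoint_sos z -> (w^T *m z) 0 0 = 0.
  move=> [vs ->]; rewrite adjoint_sos_pairing big1 // => v _.
  by rewrite Aw0 mulmx0 mul0mx mxE.
have x_sos : adjoint_sos x by apply: ball_x; rewrite subrr norm2_0.
pose de := e / (norm2 w + 1).
have norm2w_ge0 : 0 <= norm2 w by exact: sqrtr_ge0.
have de_gt0 : 0 < de by rewrite divr_gt0 // ltr_wpDl.
have /orth : adjoint_sos (x + de *: w).
  apply: ball_x; rewrite addrAC subrr add0r norm2Z gtr0_norm // /de mulrAC.
  by rewrite ltr_pdivrMr ?ltr_wpDl // ltr_pM2l // ltrDl.
rewrite mulmxDr -scalemxAr mxE (orth _ x_sos) add0r mxE => /eqP.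
by rewrite mulf_eq0 gt_eqF //= => /eqP /dotmx_self_eq0.
Qed.

Hypothesis A_sym : forall x, (A x)^T = A x.

Section CholeskyCoordinates.
Variables (y : 'cV[R]_U) (C : 'M[R]_N).
Hypotheses (C_unit : C \in unitmx) (AyE : A y = C^T *m C).
Let B := (invmx C)^T.
Let congrB (Y : 'M[R]_N) := B *m Y *m B^T.

Lemma invmx_cholesky : invmx (A y) = B^T *m B.
Proof.
have Ay_unit : A y \in unitmx by rewrite AyE unitmx_mul unitmx_tr C_unit.
rewrite -[RHS](mulKmx Ay_unit) AyE /B trmxK -!mulmxA (mulmxA C) mulmxV //.
by rewrite mul1mx -trmx_mul mulVmx // trmx1 mulmx1.
Qed.

Lemma mxtrace_invmx_cholesky (Y : 'M[R]_N) : \tr (Y *m invmx (A y)) = \tr (congrB Y).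
Proof. by rewrite invmx_cholesky mulmxA mxtrace_mulC mulmxA. Qed.

Lemma hess_quad_cholesky (z : 'cV[R]_U) :
  (z^T *m hess A y *m z) 0 0 = frobenius_sqr (congrB (A z)).
Proof.
rewrite hess_quad invmx_cholesky -mxtrace_mul_sym; last first.
  by rewrite /congrB !trmx_mul trmxK A_sym mulmxA.
by rewrite /congrB !mulmxA mxtrace_mulC !mulmxA.
Qed.

Lemma quad_cholesky (Y : 'M[R]_N) (v : 'cV[R]_N) :
  v^T *m Y *m v = (C *m v)^T *m congrB Y *m (C *m v).
Proof.
have CB : C^T *m B = 1%:M by rewrite /B -trmx_mul mulVmx // trmx1.
have BC : B^T *m C = 1%:M by rewrite /B trmxK mulVmx.
rewrite /congrB trmx_mul !mulmxA -(mulmxA v^T C^T B) CB mulmx1.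
by rewrite -(mulmxA _ B^T C) BC mulmx1.
Qed.

End CholeskyCoordinates.

Lemma mxtrace_hess_le (y z : 'cV[R]_U) : posdef (A y) ->
  \tr (A z *m invmx (A y)) <= Num.sqrt N%:R * Num.sqrt ((z^T *m hess A y *m z) 0 0).
Proof.
move=> /posdef_cholesky [C C_unit AyE].
rewrite (mxtrace_invmx_cholesky C_unit AyE) (hess_quad_cholesky C_unit AyE).
apply: le_of_sqr_le; first by rewrite mulr_ge0 ?sqrtr_ge0.
by rewrite exprMn !sqr_sqrtr ?ler0n ?frobenius_sqr_ge0 // sqr_mxtrace_le.
Qed.

Lemma neg_quad_hess_le (y z : 'cV[R]_U) (v : 'cV[R]_N) : posdef (A y) ->
  - (v^T *m A z *m v) 0 0 <=
  Num.sqrt ((z^T *m hess A y *m z) 0 0) * (v^T *m A y *m v) 0 0.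
Proof.
move=> /posdef_cholesky [C C_unit AyE].
have -> : v^T *m A y *m v = (C *m v)^T *m (C *m v) by rewrite AyE trmx_mul !mulmxA.
rewrite (hess_quad_cholesky C_unit AyE) (quad_cholesky C_unit).
apply: le_of_sqr_le; first by rewrite mulr_ge0 ?sqrtr_ge0 ?dotmx_self_ge0.
by rewrite sqrrN exprMn sqr_sqrtr ?frobenius_sqr_ge0 // sqr_quad_form_le.
Qed.

Lemma neg_pairing_sos_le (y z u : 'cV[R]_U) : posdef (A y) -> adjoint_sos u ->
  - (z^T *m u) 0 0 <= Num.sqrt ((z^T *m hess A y *m z) 0 0) * (y^T *m u) 0 0.
Proof.
move=> Ay_pd [vs ->]; rewrite !adjoint_sos_pairing -sumrN mulr_sumr.
by apply: ler_sum => v _; exact: neg_quad_hess_le.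
Qed.

Hypothesis A_inj : forall w, A w = 0 -> w = 0.

Lemma hess_quad_gt0 (y z : 'cV[R]_U) :
  posdef (A y) -> z != 0 -> 0 < (z^T *m hess A y *m z) 0 0.
Proof.
move=> /posdef_cholesky [C C_unit AyE] z0.
rewrite (hess_quad_cholesky C_unit AyE) lt_def frobenius_sqr_ge0 andbT.
apply: contra_neq z0 => /frobenius_sqr_eq0 congr_Az0; apply: A_inj.
have B_unit : (invmx C)^T \in unitmx by rewrite unitmx_tr unitmx_inv.
have BT_unit : (invmx C)^T^T \in unitmx by rewrite trmxK unitmx_inv.
have := congr1 (fun Y => invmx (invmx C)^T *m Y *m invmx (invmx C)^T^T) congr_Az0.
by rewrite /= !mulmxA mulVmx // mul1mx mulmxK // mulmx0 mul0mx.
Qed.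

Lemma hess_unitmx (y : 'cV[R]_U) : posdef (A y) -> hess A y \in unitmx.
Proof.
move=> Ay_pd; rewrite unitmxE unitfE; apply/negP => /det0P [v v0 vH].
have vT0 : v^T != 0 by rewrite trmx_eq0.
by have := hess_quad_gt0 Ay_pd vT0; rewrite trmxK vH mul0mx mxE ltxx.
Qed.

Lemma dual_norm_hess (y z : 'cV[R]_U) : posdef (A y) ->
  dual_norm A y (hess A y *m z) = Num.sqrt ((z^T *m hess A y *m z) 0 0).
Proof.
move=> /hess_unitmx H_unit; rewrite /dual_norm trmx_mul -!mulmxA mulKmx //.
have -> : z^T *m ((hess A y)^T *m z) = (z^T *m hess A y *m z)^T.
  by rewrite !trmx_mul trmxK mulmxA.
by rewrite mxE mulmxA.
Qed.

Lemma dual_norm_certificate_le (y u one : 'cV[R]_U) (r : R) :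
  posdef (A y) -> adjoint_sos u -> adjoint_sos one -> one != 0 -> 0 < r ->
  adjoint A (invmx (A y)) - u = r *: one ->
  0 < dual_norm A y one /\ r * dual_norm A y one <= N%:R + Num.sqrt N%:R.
Proof.
move=> Ay_pd u_sos one_sos one0 r_gt0 gradE.
have Ay_unit := posdef_unitmx Ay_pd.
set H := hess A y; set z := invmx H *m one.
have oneE : one = H *m z by rewrite /z mulKVmx ?hess_unitmx.
have z0 : z != 0 by apply: contra_neq one0 => z0; rewrite oneE z0 mulmx0.
set Q := (z^T *m H *m z) 0 0.
have Q_gt0 : 0 < Q by rewrite hess_quad_gt0.
have sQ_gt0 : 0 < Num.sqrt Q by rewrite sqrtr_gt0.
have pairing w : r * (w^T *m one) 0 0 = \tr (A w *m invmx (A y)) - (w^T *m u) 0 0.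
  have := congr1 (fun x => (w^T *m x) 0 0) gradE.
  by rewrite /= mulmxBr -scalemxAr [((_ - _ : 'M_1) 0 0)]mxE [((_ *: _ : 'M_1) 0 0)]mxE
    [((- _ : 'M_1) 0 0)]mxE adjoint_pairing => <-.
have rQ : r * Q = \tr (A z *m invmx (A y)) - (z^T *m u) 0 0.
  by rewrite -pairing oneE mulmxA.
have yu_le : (y^T *m u) 0 0 <= N%:R.
  have := pairing y; rewrite mulmxV // mxtrace1 => /eqP; rewrite eq_sym subr_eq.
  move=> /eqP ->; rewrite lerDr pmulr_rge0 //; exact: adjoint_sos_pairing_ge0.
have trace_le := mxtrace_hess_le z Ay_pd.
have u_le := neg_pairing_sos_le z Ay_pd u_sos.
have yu_scaled := ler_wpM2l (ltW sQ_gt0) yu_le.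
rewrite -/H -/Q in trace_le u_le.
have rQ_le : r * Q <= (N%:R + Num.sqrt N%:R) * Num.sqrt Q by lra.
rewrite oneE dual_norm_hess // -/H -/Q; split => //.
by rewrite -(ler_pM2r sQ_gt0) -mulrA -expr2 sqr_sqrtr ?(ltW Q_gt0).
Qed.

End LinearOperator.

Section BlockDiagonal.
Variables (R : pzRingType) (m : nat) (L : 'I_m -> nat).

Lemma mxdiag_scale (a : R) (B : forall i, 'M[R]_(L i)) :
  \mxdiag_i (a *: B i) = a *: \mxdiag_i B i.
Proof.
have -> : a *: \mxdiag_i B i =
    \mxblock_(j, k) (a *: (if j == k then conform_mx 0 (B j) else 0 : 'M[R]_(L j, L k))).
  by apply/matrixP => i j; rewrite !mxE.
by apply/eq_mxblock => i j; case: eqVneq => [->|]; rewrite ?conform_mx_id ?scaler0.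
Qed.

Definition block_embed (i : 'I_m) (x : 'cV[R]_(L i)) : 'cV[R]_(\sum_j L j) :=
  \mxcol_j (if i == j then conform_mx 0 x else 0).

Lemma quad_mxdiag_block_embed i (x : 'cV[R]_(L i)) (B : forall j, 'M[R]_(L j)) :
  (block_embed x)^T *m \mxdiag_j B j *m block_embed x = x^T *m B i *m x.
Proof.
rewrite tr_mxcol mul_mxrow_mxdiag mul_mxrow_mxcol (bigD1 i) //= big1 ?addr0.
  by rewrite eqxx conform_mx_id.
by move=> j /negPf; rewrite eq_sym => ->; rewrite trmx0 !mul0mx.
Qed.

End BlockDiagonal.

Lemma linear_LamB (R : realType) U m (L : 'I_m -> nat)
    (Lam : forall i, 'cV[R]_U -> 'M[R]_(L i)) :
  (forall i, linear (Lam i)) -> linear (LamB Lam).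
Proof.
move=> Lam_linear a x z; rewrite /LamB -mxdiag_scale -mxdiagD.
by apply: eq_mxdiag => i; exact: Lam_linear.
Qed.

Lemma polyOf_is_linear (R : realType) n U (q : 'I_U -> {mpoly R[n]}) : linear (polyOf q).
Proof.
move=> a x z; rewrite /polyOf scaler_sumr -big_split; apply: eq_bigr => u _.
by rewrite !mxE scalerDl scalerA.
Qed.

HB.instance Definition _ (R : realType) n U (q : 'I_U -> {mpoly R[n]}) :=
  GRing.isLinear.Build R 'cV[R]_U {mpoly R[n]} *:%R (polyOf q) (polyOf_is_linear q).

Lemma polyOf_inj (R : realType) n U (q : 'I_U -> {mpoly R[n]}) :
  (forall x, polyOf q x = 0 -> x = 0) -> injective (polyOf q).
Proof.
move=> q_free x z xz; apply/eqP; rewrite -subr_eq0; apply/eqP/q_free.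
by rewrite linearB /= xz subrr.
Qed.

Lemma polyOf_col (R : realType) n U (q : 'I_U -> {mpoly R[n]}) (f : 'I_U -> R) :
  polyOf q (\col_u f u) = \sum_u f u *: q u.
Proof. by apply: eq_bigr => u _; rewrite mxE. Qed.

Section GramOperator.
Variables (R : realType) (n U L : nat) (q : 'I_U -> {mpoly R[n]}).
Variables (g : {mpoly R[n]}) (p : 'I_L -> {mpoly R[n]}) (Lam : 'cV[R]_U -> 'M[R]_L).
Hypothesis LamE : forall j k, \sum_u (Lam (delta_mx u 0)) j k *: q u = g * p j * p k.

Lemma gram_rank1 (x : 'cV[R]_L) :
  g * polyOf p x ^+ 2 = polyOf q (adjoint Lam (x *m x^T)).
Proof.
rewrite adjoint_rank1E polyOf_col.
under [RHS]eq_bigr => u _ do rewrite quad_formE scaler_suml.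
rewrite exchange_big /=.
under [RHS]eq_bigr => j _ do
  (under eq_bigr => u _ do rewrite scaler_suml; rewrite exchange_big /=).
rewrite /polyOf expr2 big_distrlr /= mulr_sumr; apply: eq_bigr => j _.
rewrite mulr_sumr; apply: eq_bigr => k _.
under eq_bigr => u _ do rewrite -scalerA.
by rewrite -scaler_sumr LamE -!scalerAl -!scalerAr scalerA !mulrA.
Qed.

Hypothesis q_free : forall x, polyOf q x = 0 -> x = 0.
Hypothesis Lam_linear : linear Lam.

Lemma gram_sym (x : 'cV[R]_U) : (Lam x)^T = Lam x.
Proof.
have sym_basis u : (Lam (delta_mx u 0))^T = Lam (delta_mx u 0).
  apply/matrixP => j k; rewrite mxE.
  have : \col_u (Lam (delta_mx u 0) k j) = \col_u (Lam (delta_mx u 0) j k) :> 'cV[R]_U.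
    by apply: (polyOf_inj q_free); rewrite !polyOf_col !LamE -!mulrA [p k * _]mulrC.
  by move/(congr1 (fun v : 'cV[R]_U => v u 0)); rewrite !mxE.
rewrite (linear_coordE Lam_linear x) linear_sum; apply: eq_bigr => u _.
by rewrite linearZ /= sym_basis.
Qed.

End GramOperator.

Section WeightedSOS.
Variables (R : realType) (n m : nat) (g : 'I_m -> {mpoly R[n]}) (d : 'I_m -> nat).
Variables (U : nat) (q : 'I_U -> {mpoly R[n]}) (L : 'I_m -> nat).
Variables (p : forall i, 'I_(L i) -> {mpoly R[n]}).
Variables (Lam : forall i, 'cV[R]_U -> 'M[R]_(L i)).
Arguments p : clear implicits.
Arguments Lam : clear implicits.
Hypothesis q_free : forall x, polyOf q x = 0 -> x = 0.
Hypothesis p_span : forall i (f : {mpoly R[n]}),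
  deg_le f (d i) -> exists x : 'cV[R]_(L i), f = polyOf (p i) x.
Hypothesis LamE :
  forall i j k, \sum_u (Lam i (delta_mx u 0)) j k *: q u = g i * p i j * p i k.

Lemma inWSOS_adjoint_sos (x : 'cV[R]_U) :
  inWSOS g d (polyOf q x) -> adjoint_sos (LamB Lam) x.
Proof.
pose in_image f := exists2 z, adjoint_sos (LamB Lam) z & f = polyOf q z.
have image0 : in_image 0 by exists 0; [exact: adjoint_sos0 | rewrite linear0].
have imageD f f' : in_image f -> in_image f' -> in_image (f + f').
  move=> [z z_sos ->] [z' z'_sos ->].
  by exists (z + z'); [exact: adjoint_sosD | rewrite linearD].
have image_sqr i h : deg_le h (d i) -> in_image (g i * h ^+ 2).
  move=> /p_span [v ->]; set bv := block_embed (L := L) v.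
  exists (adjoint (LamB Lam) (bv *m bv^T)); first by exists [:: bv]; rewrite big_seq1.
  rewrite (gram_rank1 (@LamE i)) !adjoint_rank1E; congr polyOf.
  by apply/matrixP => u j; rewrite [LHS]mxE [RHS]mxE quad_mxdiag_block_embed.
move=> [sg [sg_sos xE]].
have [z z_sos /(polyOf_inj q_free) ->] : in_image (polyOf q x).
  rewrite xE; apply: big_ind => // i _.
  have [hs [hs_deg ->]] := sg_sos i; rewrite mulr_sumr big_seq.
  by apply: big_ind => // h /hs_deg /image_sqr.
exact: z_sos.
Qed.

Hypothesis Lam_linear : forall i, linear (Lam i).

Lemma LamB_sym (x : 'cV[R]_U) : (LamB Lam x)^T = LamB Lam x.
Proof.
rewrite /LamB tr_mxdiag; apply: eq_mxdiag => i.
exact: (gram_sym (@LamE i) q_free (Lam_linear i)).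
Qed.

End WeightedSOS.

Unset Implicit Arguments.

Theorem theorem2 (R : realType) (n m : nat)
  (g : 'I_m -> {mpoly R[n]}) (d : 'I_m -> nat)
  (U : nat) (q : 'I_U -> {mpoly R[n]})
  (L : 'I_m -> nat) (p : forall i : 'I_m, 'I_(L i) -> {mpoly R[n]})
  (Lam : forall i : 'I_m, 'cV[R]_U -> 'M[R]_(L i))
  (one : 'cV[R]_U) :
  (forall i, g i != 0) ->
  is_basis (inV g d) q ->
  (forall i, is_basis (fun f => deg_le f (d i)) (p i)) ->
  (forall i (a : R) (x z : 'cV[R]_U), Lam i (a *: x + z) = a *: Lam i x + Lam i z) ->
  (forall i (j k : 'I_(L i)),
      \sum_(u < U) (Lam i (delta_mx u 0)) j k *: q u = g i * p i j * p i k) ->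
  proper_cone (fun s => inWSOS g d (polyOf q s)) ->
  polyOf q one = 1 ->
  interiorP (fun s => inWSOS g d (polyOf q s)) one ->
  exists2 C : R, 0 < C &
    forall (t : 'cV[R]_U) (cstar c : R) (y : 'cV[R]_U),
      boundaryP (fun s => inWSOS g d (polyOf q s)) (t - cstar *: one) ->
      c < cstar ->
      posdef (LamB Lam y) ->
      - grad (LamB Lam) y = t - c *: one ->
      cstar - c <= (C * dual_norm (LamB Lam) y one)^-1.
Proof.
move=> _ [_ q_free _] p_basis Lam_linear LamE [_ _ cone_closed _ _] one_poly.
move=> [e e_gt0 one_ball].
have p_span i f : deg_le f (d i) -> exists x, f = polyOf (p i) x.
  by have [_ _] := p_basis i; apply.
have sos_of_cone := inWSOS_adjoint_sos q_free p_span LamE.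
have A_linear := linear_LamB Lam_linear.
have A_sym := LamB_sym q_free LamE Lam_linear.
have A_inj : forall w, LamB Lam w = 0 -> w = 0.
  apply: (interior_adjoint_sos_inj A_linear (x := one)).
  by exists e => // z /one_ball /sos_of_cone.
have one_sos : adjoint_sos (LamB Lam) one.
  by apply/sos_of_cone/one_ball; rewrite subrr norm2_0.
have one_neq0 : one != 0.
  by apply: contra_neq (oner_neq0 {mpoly R[n]}) => one0; rewrite -one_poly one0 linear0.
exists ((\sum_i L i)%:R + Num.sqrt (\sum_i L i)%:R + 1)^-1.
  by rewrite invr_gt0 ltr_wpDl // addr_ge0 ?sqrtr_ge0.
move=> t cstar c y [u_in_closure _] c_lt_cstar y_pd gradE.
have u_sos := sos_of_cone _ (cone_closed _ u_in_closure).
have r_gt0 : 0 < cstar - c by rewrite subr_gt0.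
have certE :
    adjoint (LamB Lam) (invmx (LamB Lam y)) - (t - cstar *: one) = (cstar - c) *: one.
  by move: gradE; rewrite /grad opprK => ->; rewrite scalerBl opprB addrC addrA subrK.
have [dn_gt0 dn_le] :=
  dual_norm_certificate_le A_linear A_sym A_inj y_pd u_sos one_sos one_neq0 r_gt0 certE.
by rewrite invfM invrK ler_pdivlMr // (le_trans dn_le) // lerDl.
Qed.
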